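(* Let $I,J,t\in\mathbb{N}$ and $f:\{0,1\}^d\to\{0,1\}$ arbitrary, and let $\eta=\Pr_{x,y,z\sim\{0,1\}^d}[T_f(x,y,z)=1]$ for independent uniform $x,y,z$. If $z$ and $x_i^{(\ell)},y_j^{(\ell)}$ for $(i,j,\ell)\in[I]\times[J]\times[t+1]$ are sampled uniformly and independently from $\{0,1\}^d$, then $$\Pr\Big[\bigcap_{i\in[I],\,j\in[J],\,\ell\in[t+1]}\big[T_f(x_i^{(\ell)},y_j^{(\ell)},z)=1\big]\Big]\ge\eta^{IJ(t+1)}.$$
   Context: For $f:\{0,1\}^d\to\{0,1\}$ and $x,y,z\in\{0,1\}^d$, $T_f(x,y,z)=\sum_{\emptyset\neq S\subseteq\{x,y,z\}} f\big(\bigoplus_{u\in S}u\big)\bmod 2$ (the sum of $f$ over $x,y,z,x\oplus y,x\oplus z,y\oplus z,x\oplus y\oplus z$), where $\oplus$ is bitwise XOR. *)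

From HB Require Import structures.
From mathcomp Require Import all_boot all_order all_algebra.
Set Implicit Arguments. Unset Strict Implicit. Unset Printing Implicit Defensive.
Import Order.TTheory GRing.Theory Num.Theory.

Definition vec (d : nat) := {ffun 'I_d -> bool}.

Definition vxor (d : nat) (u v : vec d) : vec d := [ffun i => u i (+) v i].

Definition Tf (d : nat) (f : vec d -> bool) (x y z : vec d) : nat :=
  (f x + f y + f z + f (vxor x y) + f (vxor x z) + f (vxor y z)
   + f (vxor (vxor x y) z)) %% 2.

Definition Pr (T : finType) (A : pred T) : rat :=
  (#|A|%:R / #|T|%:R)%R.

From HB Require Import structures.
From mathcomp Require Import all_boot all_order all_algebra.
From mathcomp Require Import ring.
Set Implicit Arguments. Unset Strict Implicit. Unset Printing Implicit Defensive.
Import Order.TTheory GRing.Theory Num.Theory.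
Local Open Scope ring_scope.

(* Fixing z and setting G_z(x, y) = [T_f(x, y, z) = 1], the event has
   conditional probability equal to the mean, over t+1 independent layers, of
   the product of G_z over the edges of the complete bipartite graph K_{I,J}.
   - Convexity of x |-> x^n (its tangent-line bound) gives Jensen's inequality
     (mean h)^n <= mean (h^n) for nonnegative h.
   - Means over uniformly random functions factor coordinatewise.
   - With these, K_{I,J} satisfies Sidorenko's inequality: its density under
     a nonnegative weight G is at least (edge density of G)^(I*J).
   - Independent layers multiply, giving the exponent I*J*(t+1) for each z;
     a last application of Jensen over z turns the mean of the z-wise edge
     densities, which is eta, into the bound of the theorem. *)

Lemma pow_tangent (R : realDomainType) (n : nat) (x m : R) :
  0 <= x -> 0 <= m -> m ^+ n + m ^+ n.-1 *+ n * (x - m) <= x ^+ n.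
Proof.
move=> x_ge0 m_ge0; rewrite -subr_ge0.
have -> : x ^+ n - (m ^+ n + m ^+ n.-1 *+ n * (x - m)) =
          (x - m) * \sum_(i < n) m ^+ i * (x ^+ (n.-1 - i) - m ^+ (n.-1 - i)).
  rewrite opprD addrA subrXX [_ *+ n * _]mulrC -mulrBr; congr (_ * _).
  under [RHS]eq_bigr => i _ do rewrite mulrBr.
  rewrite sumrB; congr (_ - _); first by apply: eq_bigr => i _; rewrite mulrC.
  transitivity (\sum_(i < n) m ^+ n.-1); first by rewrite sumr_const card_ord.
  apply: eq_bigr => i _; rewrite -exprD subnKC // -ltnS prednK //.
  exact: leq_ltn_trans (leq0n i) (ltn_ord i).
have [x_le_m | m_le_x] := leP x m.
- apply: mulr_le0; first by rewrite subr_le0.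
  rewrite -oppr_ge0 -sumrN; apply: sumr_ge0 => i _.
  by rewrite -mulrN mulr_ge0 ?exprn_ge0 // oppr_ge0 subr_le0 lerXn2r.
- apply: mulr_ge0; first by rewrite subr_ge0 ltW.
  apply: sumr_ge0 => i _; rewrite mulr_ge0 ?exprn_ge0 // subr_ge0 lerXn2r ?ltW //.
Qed.

Section Mean.
Variable R : realFieldType.

(* The mean of h under the uniform distribution on T (0 when T is empty). *)
Definition mean (T : finType) (h : T -> R) : R := (\sum_x h x) / #|T|%:R.

Lemma mean_ge0 (T : finType) (h : T -> R) : (forall x, 0 <= h x) -> 0 <= mean h.
Proof. by move=> h_ge0; rewrite /mean divr_ge0 // sumr_ge0. Qed.

Lemma mean_le (T : finType) (h1 h2 : T -> R) :
  (forall x, h1 x <= h2 x) -> mean h1 <= mean h2.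
Proof. by move=> le_h; rewrite /mean ler_wpM2r ?invr_ge0 ?ler0n // ler_sum. Qed.

Lemma eq_mean (T : finType) (h1 h2 : T -> R) :
  h1 =1 h2 -> mean h1 = mean h2.
Proof. by move=> eq_h; rewrite /mean (eq_bigr _ (fun x _ => eq_h x)). Qed.

(* Linearity of the mean on affine functions of h; needs T nonempty. *)
Lemma mean_affine (T : finType) (x0 : T) (h : T -> R) (a c b : R) :
  mean (fun x => a + c * (h x - b)) = a + c * (mean h - b).
Proof.
have N_neq0 : #|T|%:R != 0 :> R.
  by rewrite pnatr_eq0 -lt0n; apply/card_gt0P; exists x0.
by rewrite /mean big_split /= -mulr_sumr sumrB !sumr_const; field.
Qed.

Lemma mean_pow_ge (T : finType) (x0 : T) (h : T -> R) (n : nat) :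
  (forall x, 0 <= h x) -> mean h ^+ n <= mean (fun x => h x ^+ n).
Proof.
move=> h_ge0; set m := mean h.
have tangent x : m ^+ n + m ^+ n.-1 *+ n * (h x - m) <= h x ^+ n.
  exact: pow_tangent (h_ge0 x) (mean_ge0 h_ge0).
by apply: le_trans (mean_le tangent); rewrite (mean_affine x0) subrr mulr0 addr0.
Qed.

Lemma mean_pair (T1 T2 : finType) (h : T1 * T2 -> R) :
  mean h = mean (fun a => mean (fun b => h (a, b))).
Proof.
rewrite /mean card_prod natrM invfM -mulr_suml -mulrA [_^-1 * _^-1]mulrC.
by congr (_ * _); rewrite pair_big; apply: eq_bigr => -[a b].
Qed.

Lemma mean_exch (T1 T2 : finType) (h : T1 -> T2 -> R) :
  mean (fun a => mean (fun b => h a b)) = mean (fun b => mean (fun a => h a b)).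
Proof.
rewrite /mean -!mulr_suml -!mulrA [_^-1 * _]mulrC; congr (_ * _).
exact: exchange_big.
Qed.

(* The values of a uniformly random function are independent and uniform,
   so the mean of a product over its coordinates factors. *)
Lemma mean_ffun_prod (A B : finType) (h : A -> B -> R) :
  mean (fun F : {ffun A -> B} => \prod_a h a (F a)) = \prod_a mean (h a).
Proof.
by rewrite /mean -bigA_distr_bigA big_split /= prodr_const card_ffun natrX exprVn.
Qed.

Lemma mean_ffun_prod_const (A B : finType) (h : B -> R) :
  mean (fun F : {ffun A -> B} => \prod_a h (F a)) = mean h ^+ #|A|.
Proof. by rewrite (mean_ffun_prod (fun _ => h)) prodr_const. Qed.

Lemma mean_reindex (T T' : finType) (phi : T' -> T) (h : T -> R) :
  bijective phi -> mean h = mean (fun x => h (phi x)).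
Proof.
move=> phi_bij; rewrite /mean (bij_eq_card phi_bij); congr (_ / _).
by rewrite (reindex phi) //; apply: onW_bij.
Qed.

End Mean.

Definition uncurry_ffun (A L V : finType) (X : {ffun L -> {ffun A -> V}}) :
  {ffun A * L -> V} := [ffun p => X p.2 p.1].

Lemma uncurry_ffun_bij (A L V : finType) : bijective (@uncurry_ffun A L V).
Proof.
exists (fun X : {ffun A * L -> V} => [ffun l => [ffun a => X (a, l)]]).
  by move=> X; apply/ffunP => l; apply/ffunP => a; rewrite !ffunE.
by move=> X; apply/ffunP => -[a l]; rewrite !ffunE.
Qed.

Section CompleteBipartite.
Variables (R : realFieldType) (U V : finType) (u0 : U) (v0 : V).
Variable G : U -> V -> R.
Hypothesis G_ge0 : forall x y, 0 <= G x y.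

Definition edge_density : R := mean (fun x => mean (fun y => G x y)).

Definition bipartite_density (A B : finType)
    (xs : {ffun A -> U}) (ys : {ffun B -> V}) : R :=
  \prod_a \prod_b G (xs a) (ys b).

Definition bipartite_mean (A B : finType) : R :=
  mean (fun xs : {ffun A -> U} =>
    mean (fun ys : {ffun B -> V} => bipartite_density xs ys)).

Lemma edge_density_ge0 : 0 <= edge_density.
Proof. by apply: mean_ge0 => x; apply: mean_ge0. Qed.

Lemma bipartite_density_ge0 (A B : finType) xs ys : 0 <= @bipartite_density A B xs ys.
Proof. by apply: prodr_ge0 => a _; apply: prodr_ge0. Qed.

Lemma bipartite_mean_ge0 (A B : finType) : 0 <= bipartite_mean A B.
Proof.
by apply: mean_ge0 => xs; apply: mean_ge0 => ys; apply: bipartite_density_ge0.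
Qed.

(* Sidorenko's inequality for K_{A,B}: average over the B-labelling of the
   #|A|-th power of a row mean (Jensen), then over x of (mean_y G)^#|B|. *)
Lemma complete_bipartite_mean (A B : finType) :
  edge_density ^+ (#|A| * #|B|) <= bipartite_mean A B.
Proof.
pose row (ys : {ffun B -> V}) x := \prod_b G x (ys b).
have row_ge0 ys x : 0 <= row ys x by apply: prodr_ge0.
have mean_row_ge0 ys : 0 <= mean (row ys) := mean_ge0 (row_ge0 ys).
have col_mean x : mean (fun ys => row ys x) = mean (G x) ^+ #|B|.
  exact: mean_ffun_prod_const.
have row_mean ys : mean (fun xs : {ffun A -> U} => bipartite_density xs ys) =
                   mean (row ys) ^+ #|A|.
  by rewrite -(@mean_ffun_prod_const _ A _ (row ys)).
rewrite /bipartite_mean (mean_exch (@bipartite_density A B)) (eq_mean row_mean).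
rewrite mulnC exprM; apply: le_trans (mean_pow_ge [ffun=> v0] _ mean_row_ge0).
apply: lerXn2r; rewrite ?nnegrE ?exprn_ge0 ?edge_density_ge0 ?mean_ge0 //.
rewrite (mean_exch row) (eq_mean col_mean) (mean_pow_ge u0) // => x.
exact: mean_ge0.
Qed.

(* #|L| independent copies of K_{A,B}: the layers' densities multiply. *)
Lemma layered_bipartite_mean (A B L : finType) :
  edge_density ^+ (#|A| * #|B| * #|L|) <=
  mean (fun X : {ffun A * L -> U} => mean (fun Y : {ffun B * L -> V} =>
    \prod_a \prod_b \prod_l G (X (a, l)) (Y (b, l)))).
Proof.
have by_layers (X : {ffun L -> {ffun A -> U}}) (Y : {ffun L -> {ffun B -> V}}) :
    \prod_a \prod_b \prod_l G (uncurry_ffun X (a, l)) (uncurry_ffun Y (b, l)) =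
    \prod_l bipartite_density (X l) (Y l).
  under eq_bigr => a _ do rewrite exchange_big /=.
  rewrite exchange_big /=; apply: eq_bigr => l _; apply: eq_bigr => a _.
  by apply: eq_bigr => b _; rewrite !ffunE.
rewrite (mean_reindex _ (uncurry_ffun_bij A L U)).
under eq_mean => X do rewrite (mean_reindex _ (uncurry_ffun_bij B L V))
  (eq_mean (by_layers X)) (mean_ffun_prod (fun l => bipartite_density (X l))).
rewrite (mean_ffun_prod_const _ (fun xs => mean (bipartite_density xs))).
rewrite exprM lerXn2r ?nnegrE ?exprn_ge0 ?edge_density_ge0 //.
- exact: bipartite_mean_ge0.
- exact: complete_bipartite_mean.
Qed.

End CompleteBipartite.

Lemma Pr_mean (T : finType) (P : pred T) : Pr P = mean (fun x => (P x)%:R).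
Proof.
rewrite /Pr /mean; congr (_ / _); rewrite -sum1_card natr_sum big_mkcond /=.
by apply: eq_bigr => x _; rewrite unfold_in; case: (P x).
Qed.

Lemma forall_indicator (R : comPzSemiRingType) (T : finType) (P : pred T) :
  [forall x, P x]%:R = \prod_x (P x)%:R :> R.
Proof.
have [/forallP P_all | /forallPn [x not_Px]] := boolP [forall x, P x].
  by rewrite big1 // => x _; rewrite P_all.
by rewrite (bigD1 x) //= (negbTE not_Px) mul0r.
Qed.

Lemma forall3_indicator (R : comPzSemiRingType) (A B C : finType)
    (P : A -> B -> C -> bool) :
  [forall a, forall b, forall c, P a b c]%:R =
  \prod_a \prod_b \prod_c (P a b c)%:R :> R.
Proof.
rewrite forall_indicator; apply: eq_bigr => a _; rewrite forall_indicator.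
by apply: eq_bigr => b _; rewrite forall_indicator.
Qed.

Theorem claim4p4 (d I J t : nat) (f : vec d -> bool) :
  let eta := Pr [pred p : vec d * vec d * vec d | Tf f p.1.1 p.1.2 p.2 == 1%N] in
  (eta ^+ (I * J * t.+1) <=
   Pr [pred w : vec d * {ffun 'I_I * 'I_t.+1 -> vec d}
                      * {ffun 'I_J * 'I_t.+1 -> vec d} |
       [forall i : 'I_I, forall j : 'I_J, forall l : 'I_t.+1,
          Tf f (w.1.2 (i, l)) (w.2 (j, l)) w.1.1 == 1%N]])%R.
Proof.
(* For fixed z, layered_bipartite_mean applies to the weight g z; Jensen over
   z then compares with eta, the mean over z of the edge densities. *)
cbv zeta; set eta := Pr [pred p : vec d * vec d * vec d | _].
pose v0 : vec d := [ffun=> false].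
pose g z x y : rat := (Tf f x y z == 1%N)%:R.
have g_ge0 z x y : 0 <= g z x y by rewrite ler0n.
have eta_mean : eta = mean (fun z => edge_density (g z)).
  rewrite /eta Pr_mean !mean_pair /edge_density.
  transitivity (mean (fun x => mean (fun z => mean (fun y => g z x y)))).
    by apply: eq_mean => x; rewrite mean_exch.
  by rewrite mean_exch.
have layered_bound z := layered_bipartite_mean v0 v0 (g_ge0 z) 'I_I 'I_J 'I_t.+1.
rewrite !card_ord in layered_bound.
rewrite eta_mean Pr_mean !mean_pair.
apply: le_trans (mean_pow_ge v0 _ (fun z => edge_density_ge0 (g_ge0 z))) _.
apply: mean_le => z; apply: le_trans (layered_bound z) _.
apply: mean_le => X; apply: mean_le => Y.
by rewrite /= forall3_indicator.
Qed.
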